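(* Let $R$ be a commutative ring with identity whose set of zero-divisors contains a nonzero element, and let $n>1$. Then the orthogonality graph $O(M_n(R))$ is connected and has diameter at most $4$.
   Context: The orthogonality graph $O(S)$ of a ring $S$ is the undirected graph whose vertices are the nonzero two-sided zero-divisors of $S$, distinct vertices $x,y$ being adjacent iff $xy=yx=0$; the diameter is the supremum of graph distances between vertices. *)

From HB Require Import structures.
From mathcomp Require Import all_boot all_order all_algebra.
Set Implicit Arguments. Unset Strict Implicit. Unset Printing Implicit Defensive.
Import GRing.Theory.
Local Open Scope ring_scope.

(* Vertices of the orthogonality graph O(S): nonzero two-sided zero-divisors,
   i.e. x <> 0 with a x = 0 and x b = 0 for some nonzero a, b. *)
Definition two_sided_zero_divisor (S : pzRingType) (x : S) : Prop :=
  x != 0 /\ (exists a : S, a != 0 /\ a * x = 0) /\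
            (exists b : S, b != 0 /\ x * b = 0).

Definition orth_adj (S : pzRingType) (x y : S) : Prop :=
  x != y /\ x * y = 0 /\ y * x = 0.

Fixpoint orth_walk_le (S : pzRingType) (k : nat) (x y : S) : Prop :=
  match k with
  | 0 => x = y
  | k'.+1 => x = y \/ exists z : S, two_sided_zero_divisor z /\ orth_adj x z /\
                                     orth_walk_le k' z y
  end.

Definition orth_connected_diam_le (S : pzRingType) (k : nat) : Prop :=
  forall x y : S, two_sided_zero_divisor x -> two_sided_zero_divisor y ->
    orth_walk_le k x y.

(* A vertex X of O(M_n(R)) has a nonzero two-sided annihilator W in M_n(R).
   This is a McCoy-type rank argument: choose k minimal such that some nonzero
   c kills all (k+1)-minors of X but not all k-minors; then c times an
   adjugate of a suitable (k+1)x(k+1) submatrix, padded to size n, is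
   annihilated by X on both sides, because each entry of its products with X
   is c times a (k+1)-minor.  Using a zero-divisor pair z w of R, W can be
   replaced by a neighbour Z of X killed by a nonzero scalar.  Given such
   neighbours Z1 of X (killed by a) and Z3 of Y (killed by b), either some
   nonzero scalar s kills both, giving the walk X - Z1 - sI - Z3 - Y, or
   ab = 0, bZ1 <> 0, aZ3 <> 0, giving the walk X - bZ1 - aZ3 - Y. *)

From mathcomp Require Import all_boot all_order all_algebra.
From Stdlib Require Import Classical.
Import GRing.Theory.
Local Open Scope ring_scope.
Set Implicit Arguments. Unset Strict Implicit.

Section OrthogonalityWalks.

Variable S : pzRingType.

Lemma orth_walk_leS k (x y : S) : orth_walk_le k x y -> orth_walk_le k.+1 x y.
Proof.
elim: k x => [|k IHk] x /=; first by left.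
case=> [->|[z [vz [xz zy]]]]; first by left.
by right; exists z; split=> //; split=> //; apply: IHk.
Qed.

Lemma orth_walk_le_cons k (x z y : S) : x != 0 -> z != 0 ->
  x * z = 0 -> z * x = 0 -> orth_walk_le k z y -> orth_walk_le k.+1 x y.
Proof.
move=> nz_x nz_z xz zx zy; have [->|neq_xz] := eqVneq x z.
  exact: orth_walk_leS.
by right; exists z; split; [split=> //; split; exists x | split].
Qed.

End OrthogonalityWalks.

Lemma ex_fail_then_hold (P : nat -> Prop) n : ~ P 0%N -> P n ->
  exists k, [/\ (k < n)%N, ~ P k & P k.+1].
Proof.
move=> nP0; elim: n => [|m IHm] Pm; first by [].
have [Pm'|nPm'] := classic (P m); last by exists m.
by have [k [lt_km nPk Pk1]] := IHm Pm'; exists k; split=> //; apply: ltnW.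
Qed.

Lemma ex_notin_codom_ord k n (f : 'I_k -> 'I_n) : (k < n)%N ->
  exists r, r \notin codom f.
Proof.
move=> lt_kn; have /subsetPn[r _ r_f] : ~~ ([set: 'I_n] \subset codom f).
  apply: contraTN lt_kn => /subset_leq_card; rewrite cardsT card_ord => le_nf.
  by rewrite -leqNgt (leq_trans le_nf) // (leq_trans (card_size _)) ?size_codom ?card_ord.
by exists r.
Qed.

Definition extend_ord k n (f : 'I_k -> 'I_n) (r : 'I_n) (i : 'I_k.+1) : 'I_n :=
  oapp f r (unlift ord_max i).

Lemma extend_ord_lift k n (f : 'I_k -> 'I_n) (r : 'I_n) (j : 'I_k) :
  extend_ord f r (lift ord_max j) = f j.
Proof. by rewrite /extend_ord liftK. Qed.

Lemma extend_ord_eq k n (f : 'I_k -> 'I_n) (r : 'I_n) (i : 'I_k.+1) : r \notin codom f ->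
  (extend_ord f r i == r) = (i == ord_max).
Proof.
move=> r_f; rewrite /extend_ord; case: unliftP => [j ->|->]; last by rewrite !eqxx.
rewrite [lift _ _ == _]eq_sym (negbTE (neq_lift _ _)); apply: contraNF r_f => /eqP <-.
exact: codom_f.
Qed.

Section Minors.

Variables (R : comPzRingType) (n : nat) (X : 'M[R]_n).

Definition kills_minors m (c : R) :=
  forall f g : 'I_m -> 'I_n, c * \det (mxsub f g X) = 0.

Lemma kills_minors0 c : kills_minors 0 c -> c = 0.
Proof.
by move/(_ (widen_ord (leq0n n)) (widen_ord (leq0n n))); rewrite det_mx00 mulr1.
Qed.

Lemma kills_minors_det c : c * \det X = 0 -> kills_minors n c.
Proof.
move=> cX0 f g; have -> : mxsub f g X = rowsub f 1%:M *m X *m colsub g 1%:M.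
  rewrite mul_rowsub_mx mul1mx mulmx_colsub mulmx1.
  by apply/matrixP => i j; rewrite !mxE.
by rewrite !det_mulmx mulrA (mulrCA c) cX0 mulr0 mul0r.
Qed.

(* Entry (r, a) of the product is the m-minor of X with row a of the
   submatrix replaced by row r of X. *)
Lemma kills_minors_colsub_adj m c (f g : 'I_m -> 'I_n) : kills_minors m c ->
  c *: (colsub g X *m \adj (mxsub f g X)) = 0.
Proof.
move=> hc; apply/matrixP => r a; rewrite !mxE big_distrr /=.
pose f' i := if i == a then r else f i.
apply: (etrans _ (hc f' g)); rewrite (expand_det_row _ a) big_distrr /=.
apply: eq_bigr => b _; rewrite !mxE /f' eqxx; congr (c * (_ * _)).
rewrite /cofactor; congr (_ * \det _); apply/matrixP => i j.
by rewrite !mxE eq_sym (negbTE (neq_lift a i)).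
Qed.

Lemma kills_minors_adj_rowsub m c (f g : 'I_m -> 'I_n) : kills_minors m c ->
  c *: (\adj (mxsub f g X) *m rowsub f X) = 0.
Proof.
move=> hc; apply/matrixP => b s; rewrite !mxE big_distrr /=.
pose g' j := if j == b then s else g j.
apply: (etrans _ (hc f g')); rewrite (expand_det_col _ b) big_distrr /=.
apply: eq_bigr => a _; rewrite !mxE /g' eqxx [X _ _ * _]mulrC.
congr (c * (_ * _)); rewrite /cofactor; congr (_ * \det _).
by apply/matrixP => i j; rewrite !mxE eq_sym (negbTE (neq_lift b j)).
Qed.

Lemma padded_adj_extend_entry k (f g : 'I_k -> 'I_n) r s :
  r \notin codom f -> s \notin codom g ->
  (colsub (extend_ord g s) 1%:M *m \adj (mxsub (extend_ord f r) (extend_ord g s) X)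
     *m rowsub (extend_ord f r) 1%:M) s r
    = \det (mxsub f g X).
Proof.
move=> r_f s_g; rewrite !mxE (bigD1 ord_max) //= big1 ?addr0 => [|a ne_a]; last first.
  by rewrite !mxE extend_ord_eq // (negbTE ne_a) mulr0.
rewrite !mxE extend_ord_eq // eqxx mulr1 (bigD1 ord_max) //= big1 ?addr0 => [|b ne_b].
  rewrite !mxE eq_sym extend_ord_eq // eqxx mul1r /cofactor.
  rewrite -signr_odd addnn odd_double expr0 mul1r; congr (\det _).
  by apply/matrixP => i j; rewrite !mxE !extend_ord_lift.
by rewrite !mxE eq_sym extend_ord_eq // (negbTE ne_b) mul0r.
Qed.

End Minors.

Lemma mx_two_sided_annihilator (R : comPzRingType) n (X B : 'M[R]_n) :
  B != 0 -> X *m B = 0 -> exists2 W, W != 0 & X *m W = 0 /\ W *m X = 0.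
Proof.
move=> /matrix0Pn[i [j nz_Bij]] XB0.
have BX0 : B i j * \det X = 0.
  have : (\adj X *m X *m B) i j = 0 by rewrite -mulmxA XB0 mulmx0 mxE.
  by rewrite mul_adj_mx mul_scalar_mx mxE mulrC.
pose Q m := exists2 c : R, c != 0 & kills_minors X m c.
have nQ0 : ~ Q 0%N by case=> c /eqP nz_c /kills_minors0.
have Qn : Q n by exists (B i j); last exact: kills_minors_det.
have [k [lt_kn nQk [c nz_c Qc]]] := ex_fail_then_hold nQ0 Qn.
have [f [g nz_cfg]] : exists f g : 'I_k -> 'I_n, c * \det (mxsub f g X) != 0.
  apply: NNPP => H; apply: nQk; exists c => // f g.
  by apply: NNPP => /eqP cfg; apply: H; exists f, g.
have [[r r_f] [s s_g]] := (ex_notin_codom_ord f lt_kn, ex_notin_codom_ord g lt_kn).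
pose S := mxsub (extend_ord f r) (extend_ord g s) X.
exists (c *: (colsub (extend_ord g s) 1%:M *m \adj S *m rowsub (extend_ord f r) 1%:M)).
  apply: contra_neq nz_cfg => /matrixP/(_ s r).
  by rewrite [LHS]mxE padded_adj_extend_entry // mxE.
split.
  rewrite -scalemxAr !mulmxA mulmx_colsub mulmx1 scalemxAl.
  by rewrite kills_minors_colsub_adj ?mul0mx.
rewrite -scalemxAl -!mulmxA mul_rowsub_mx mul1mx scalemxAr.
by rewrite kills_minors_adj_rowsub ?mulmx0.
Qed.

Lemma orth_neighbour_scalar_torsion (R : comPzRingType) n (X : 'M[R]_n) (z w : R) :
  z != 0 -> w != 0 -> z * w = 0 -> two_sided_zero_divisor X ->
  exists Z a, [/\ Z != 0, a != 0, a *: Z = 0, X * Z = 0 & Z * X = 0].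
Proof.
move=> nz_z nz_w zw0 [_ [_ [B [nz_B XB0]]]].
have [W nz_W [XW WX]] := mx_two_sided_annihilator nz_B XB0.
have [zW0|nz_zW] := eqVneq (z *: W) 0; first by exists W, z.
exists (z *: W), w; split=> //; first by rewrite scalerA mulrC zw0 scale0r.
  by rewrite -[X * _]/(X *m _) -scalemxAr XW scaler0.
by rewrite -[_ * X]/(_ *m X) -scalemxAl WX scaler0.
Qed.

Lemma scalar_alg_neq0 (R : nzRingType) n (s : R) : s != 0 -> s%:A != 0 :> 'M[R]_n.+1.
Proof.
apply: contra_neq => /matrixP/(_ ord0 ord0).
by rewrite !mxE eqxx mulr1n mulr1.
Qed.

Theorem theorem4 (R : comNzRingType) (n : nat)
  (hZ : exists z : R, z != 0 /\ exists w : R, w != 0 /\ z * w = 0)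
  (hn : (1 < n)%N) :
  orth_connected_diam_le 'M[R]_n 4.
Proof.
case: n hn => [|n] // _; case: hZ => z [nz_z [w [nz_w zw0]]] X Y hX hY.
have [[nz_X _] [nz_Y _]] := (hX, hY).
have [Z1 [a [nz_Z1 nz_a aZ1 XZ1 Z1X]]] := orth_neighbour_scalar_torsion nz_z nz_w zw0 hX.
have [Z3 [b [nz_Z3 nz_b bZ3 YZ3 Z3Y]]] := orth_neighbour_scalar_torsion nz_z nz_w zw0 hY.
have Z3_Y : orth_walk_le 1 Z3 Y by exact: orth_walk_le_cons nz_Z3 nz_Y Z3Y YZ3 _.
have [[s nz_s [sZ1 sZ3]]|no_s] :=
  classic (exists2 s : R, s != 0 & s *: Z1 = 0 /\ s *: Z3 = 0).
  have nz_sI := scalar_alg_neq0 n nz_s.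
  apply: (orth_walk_le_cons nz_X nz_Z1 XZ1 Z1X).
  apply: (orth_walk_le_cons nz_Z1 nz_sI); rewrite ?mulr_algl ?mulr_algr //.
  by apply: (orth_walk_le_cons nz_sI nz_Z3); rewrite ?mulr_algl ?mulr_algr.
have ab0 : a * b = 0.
  apply: NNPP => /eqP nz_ab; apply: no_s; exists (a * b) => //.
  by split; [rewrite mulrC -scalerA aZ1 | rewrite -scalerA bZ3]; rewrite scaler0.
have nz_bZ1 : b *: Z1 != 0 by apply/eqP => bZ1; apply: no_s; exists b.
have nz_aZ3 : a *: Z3 != 0 by apply/eqP => aZ3; apply: no_s; exists a.
have aZ3_Y : orth_walk_le 1 (a *: Z3) Y.
  by apply: orth_walk_le_cons nz_aZ3 nz_Y _ _ _; rewrite -?scalerAl -?scalerAr ?Z3Y ?YZ3 ?scaler0.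
apply/orth_walk_leS/(orth_walk_le_cons nz_X nz_bZ1).
- by rewrite -scalerAr XZ1 scaler0.
- by rewrite -scalerAl Z1X scaler0.
apply: (orth_walk_le_cons nz_bZ1 nz_aZ3 _ _ aZ3_Y).
- by rewrite -scalerAl -scalerAr scalerA mulrC ab0 scale0r.
- by rewrite -scalerAl -scalerAr scalerA ab0 scale0r.
Qed.
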